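(* Let $G$ be a graph in which every edge is part of at most two triangles, and for a state $s$ (a $\pm1$ labeling of the edges of $G$) let $P(s)$ be the number of imbalanced triangles of $G$ in $s$. Then $P$ is nonincreasing along the nondeterministic triad dynamics: if $s\rightarrow t$ is a legal transition, then $P(s)\geq P(t)$.
   Context: A triangle is balanced if the product of its three edge labels is $1$, imbalanced otherwise. Nondeterministic triad dynamics: a legal transition consists of choosing an imbalanced triangle $T$ and changing the sign of one edge of $T$. *)

From mathcomp Require Import all_boot all_order all_algebra.
Set Implicit Arguments. Unset Strict Implicit. Unset Printing Implicit Defensive.
Import GRing.Theory Num.Theory.
Local Open Scope ring_scope.

Definition simple_graph (V : finType) (adj : rel V) : Prop :=
  symmetric adj /\ irreflexive adj.

Definition is_edge (V : finType) (adj : rel V) (e : {set V}) : bool :=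
  [exists x, exists y, adj x y && (e == [set x; y])].

Definition is_triangle (V : finType) (adj : rel V) (T : {set V}) : bool :=
  [exists x, exists y, exists z,
     [&& adj x y, adj y z, adj x z & T == [set x; y; z]]].

Definition triangles (V : finType) (adj : rel V) : {set {set V}} :=
  [set T | is_triangle adj T].

Definition edge_of (V : finType) (adj : rel V) (e T : {set V}) : bool :=
  is_edge adj e && (e \subset T).

(* A state: a +-1 labeling of the edges (values off edges are irrelevant). *)
Definition state (V : finType) (adj : rel V) (s : {set V} -> int) : Prop :=
  forall e, is_edge adj e -> s e = 1 \/ s e = -1.

Definition tri_prod (V : finType) (adj : rel V) (s : {set V} -> int)
  (T : {set V}) : int :=
  \prod_(e : {set V} | edge_of adj e T) s e.

Definition imbalanced (V : finType) (adj : rel V) (s : {set V} -> int)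
  (T : {set V}) : bool :=
  is_triangle adj T && (tri_prod adj s T != 1).

Definition P (V : finType) (adj : rel V) (s : {set V} -> int) : nat :=
  #|[set T | imbalanced adj s T]|.

Definition flip (V : finType) (s : {set V} -> int) (e : {set V})
  : {set V} -> int :=
  fun f => if f == e then - s f else s f.

Definition legal_transition (V : finType) (adj : rel V)
  (s t : {set V} -> int) : Prop :=
  exists T e, imbalanced adj s T /\ edge_of adj e T /\ t = flip s e.

Definition at_most_two_triangles (V : finType) (adj : rel V) : Prop :=
  forall e, is_edge adj e -> (#|[set T in triangles adj | e \subset T]| <= 2)%N.

(* Flipping an edge e changes the sign of the product exactly on the triangles
   containing e, of which there are at most two.  The chosen imbalanced triangle
   becomes balanced, so at most one triangle (the other one through e) can become
   imbalanced, and the count of imbalanced triangles cannot go up. *)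
From mathcomp Require Import all_boot all_order all_algebra.
Import GRing.Theory.
Local Open Scope ring_scope.

Lemma leq_card_agree_off (T : finType) (A B S : {set T}) :
  A :\: S = B :\: S -> (#|A :&: S| <= #|B :&: S|)%N -> (#|A| <= #|B|)%N.
Proof.
by move=> AB leS; rewrite -(cardsID S A) -(cardsID S B) AB leq_add2r.
Qed.

Section FlipEdge.

Variables (V : finType) (adj : rel V) (s : {set V} -> int) (e : {set V}).

Lemma tri_prod_flip_out (X : {set V}) :
  ~~ (e \subset X) -> tri_prod adj (flip s e) X = tri_prod adj s X.
Proof.
move=> neX; apply: eq_bigr => f /andP[_ fX].
by rewrite /flip; case: eqP => // fe; rewrite -fe fX in neX.
Qed.

Lemma tri_prod_flip_in (X : {set V}) :
  edge_of adj e X -> tri_prod adj (flip s e) X = - tri_prod adj s X.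
Proof.
move=> eX; rewrite /tri_prod (bigD1 e eX) [in RHS](bigD1 e eX) /= /flip eqxx.
by rewrite mulNr; congr (- (_ * _)); apply: eq_bigr => f /andP[_ /negbTE ->].
Qed.

Lemma tri_prod_sign (X : {set V}) :
  state adj s -> (tri_prod adj s X == 1) || (tri_prod adj s X == -1).
Proof.
move=> st; apply: (big_ind (fun x : int => (x == 1) || (x == -1))) => //.
- by move=> x y /orP[] /eqP -> /orP[] /eqP ->; rewrite ?mulr1 ?mulN1r ?opprK ?eqxx ?orbT.
- by move=> f /andP[ef _]; case: (st f ef) => ->; rewrite eqxx ?orbT.
Qed.

Lemma imbalanced_flip_out (X : {set V}) :
  ~~ (e \subset X) -> imbalanced adj (flip s e) X = imbalanced adj s X.
Proof. by move=> neX; rewrite /imbalanced tri_prod_flip_out. Qed.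

Lemma imbalanced_flip_in (X : {set V}) :
  state adj s -> edge_of adj e X -> imbalanced adj s X ->
  ~~ imbalanced adj (flip s e) X.
Proof.
move=> st eX /andP[_]; rewrite /imbalanced tri_prod_flip_in // negb_and negbK.
by case/orP: (tri_prod_sign X st) => /eqP ->; rewrite ?eqxx ?opprK ?orbT.
Qed.

End FlipEdge.

Theorem lemma2 (V : finType) (adj : rel V) (s t : {set V} -> int) :
  simple_graph adj -> at_most_two_triangles adj -> state adj s ->
  legal_transition adj s t -> (P adj t <= P adj s)%N.
Proof.
move=> _ two st [T [e [imT [eT ->]]]].
set S := [set X in triangles adj | e \subset X].
have TS : T \in S by rewrite !inE (andP imT).1 (andP eT).2.
have cardS : (#|S| <= 2)%N by apply: two; case/andP: eT.
apply: (@leq_card_agree_off _ _ _ S).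
  apply/setP => X; rewrite /S !inE.
  have [eX | neX] := boolP (e \subset X); last by rewrite imbalanced_flip_out.
  by rewrite andbT /imbalanced; case: (is_triangle adj X).
have new_le1 : (#|[set X | imbalanced adj (flip s e) X] :&: S| <= 1)%N.
  have new_sub : [set X | imbalanced adj (flip s e) X] :&: S \subset S :\ T.
    apply/subsetP => X; rewrite !inE => /andP[imX XS]; rewrite XS andbT.
    by apply: contraTneq imX => ->; apply: imbalanced_flip_in.
  apply: leq_trans (subset_leq_card new_sub) _.
  by move: cardS; rewrite (cardsD1 T S) TS.
apply: leq_trans new_le1 _; rewrite card_gt0.
by apply/set0Pn; exists T; rewrite in_setI TS andbT inE.
Qed.
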